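(* Let $d\ge1$, let $T$ be a $d\times d$ column-stochastic matrix ($T_{ij}\ge0$, $\sum_i T_{ij}=1$ for all $j$), and let $\Phi$ be any quantum channel on $d\times d$ matrices whose classical action is $T$. For each row $i$ write $\sum_{j=1}^d T_{ij}=n_i+a_i$ with $n_i\in\mathbb{Z}_{\ge0}$ and $a_i\in[0,1)$, and define the vector $\mathbf{s}^{(i)}(T)\in\mathbb{R}^{d^2}$ whose first $n_i$ entries equal $1$, whose $(n_i+1)$-th entry equals $a_i$, and whose remaining entries are $0$. Let $\boldsymbol{\mu}^\succ(T)=\frac1d\sum_{i=1}^d\mathbf{s}^{(i)}(T)$. Then $\boldsymbol{\mu}^\succ(T)\succ\boldsymbol{\lambda}(J_\Phi)$.
   Context: Fix an orthonormal basis $\{|i\rangle\}_{i=1}^d$ of $\mathbb{C}^d$, $|\Omega\rangle=\sum_i|ii\rangle$. The Jamio{\l}kowski state of a channel $\Phi$ is $J_\Phi=\frac1d(\Phi\otimes\mathcal{I})(|\Omega\rangle\langle\Omega|)$. The classical action of $\Phi$ is the matrix $T$ with $T_{ij}=\langle i|\Phi(|j\rangle\langle j|)|i\rangle$. $\boldsymbol{\lambda}(X)$ denotes the eigenvalues of a Hermitian $X$ in non-increasing order. For real vectors $x,y$ of equal length $n$, $x\succ y$ means $\sum_{i=1}^k x_i^\downarrow\ge\sum_{i=1}^k y_i^\downarrow$ for all $k=1,\dots,n$, with $x^\downarrow$ the non-increasing rearrangement. *)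

From HB Require Import structures.
From mathcomp Require Import all_boot all_order all_algebra.
From mathcomp Require Import reals.
From mathcomp Require Import complex mxtens.
Set Implicit Arguments. Unset Strict Implicit. Unset Printing Implicit Defensive.
Import Order.TTheory GRing.Theory Num.Theory.
Local Open Scope ring_scope.
Local Open Scope sesquilinear_scope.

(* Positive semidefinite: <v, A v> >= 0 for every complex vector v
   (on R[i], "0 <= z" means z is real and nonnegative). *)
Definition psd (R : realType) n (A : 'M[R[i]]_n) : Prop :=
  forall v : 'cV[R[i]]_n, 0 <= (v ^t* *m A *m v) 0 0.

(* The ampliation (Phi (x) id_k) acting on 'M_(d*k), where the index
   p : 'I_(d*k) corresponds to the pair (i,a) = mxtens_unindex p,
   i the system index (acted on by Phi), a the ancilla index. *)
Definition ampl (R : realType) d k (Phi : 'M[R[i]]_d -> 'M[R[i]]_d)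
    (X : 'M[R[i]]_(d * k)) : 'M[R[i]]_(d * k) :=
  \matrix_(p, q)
    Phi (\matrix_(i, j) X (mxtens_index (i, (mxtens_unindex p).2))
                          (mxtens_index (j, (mxtens_unindex q).2)))
        (mxtens_unindex p).1 (mxtens_unindex q).1.

Definition is_channel (R : realType) d (Phi : {linear 'M[R[i]]_d -> 'M[R[i]]_d}) : Prop :=
  (forall X, \tr (Phi X) = \tr X) /\
  (forall k (X : 'M[R[i]]_(d * k)), psd X -> psd (ampl Phi X)).

Definition Omega (R : realType) d : 'cV[R[i]]_(d * d) :=
  \col_p ((mxtens_unindex p).1 == (mxtens_unindex p).2)%:R.

Definition jamiolkowski (R : realType) d (Phi : 'M[R[i]]_d -> 'M[R[i]]_d)
    : 'M[R[i]]_(d * d) :=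
  (d%:R)^-1 *: ampl Phi (Omega R d *m (Omega R d) ^t*).

Definition classical_action (R : realType) d (Phi : 'M[R[i]]_d -> 'M[R[i]]_d)
    (T : 'M[R]_d) : Prop :=
  forall i j, real_complex R (T i j) = Phi (delta_mx j j) i i.

Definition spectrum (R : realType) n (A : 'M[R[i]]_n) (s : seq R) : Prop :=
  char_poly A = \prod_(r <- s) ('X - (real_complex R r)%:P).

Definition sort_desc (R : realType) (s : seq R) : seq R :=
  sort (fun a b : R => b <= a) s.

Definition majorizes (R : realType) (x y : seq R) : Prop :=
  size x = size y /\
  forall k, (k <= size x)%N ->
    \sum_(v <- take k (sort_desc y)) v <= \sum_(v <- take k (sort_desc x)) v.

Definition rowsum (R : realType) d (T : 'M[R]_d) (i : 'I_d) : R :=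
  \sum_(j < d) T i j.

(* k-th entry (0-indexed) of s^(i)(T): 1 for k < n_i, a_i for k = n_i, else 0,
   where n_i = floor(rowsum) and a_i = rowsum - n_i. *)
Definition s_entry (R : realType) d (T : 'M[R]_d) (i : 'I_d) (k : nat) : R :=
  let r := rowsum T i in
  let n := Num.floor r in
  if (k%:Z < n)%R then 1 else if k%:Z == n then r - n%:~R else 0.

Definition mu_succ (R : realType) d (T : 'M[R]_d) : seq R :=
  mkseq (fun k => (d%:R)^-1 * \sum_(i < d) s_entry T i k) (d * d).

From HB Require Import structures.
From mathcomp Require Import all_boot all_order all_algebra.
From mathcomp Require Import reals.
From mathcomp Require Import complex mxtens.
From mathcomp Require Import ring zify lra.
Import Order.TTheory GRing.Theory Num.Theory.
Local Open Scope ring_scope.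
Local Open Scope sesquilinear_scope.
Set Implicit Arguments. Unset Strict Implicit. Unset Printing Implicit Defensive.

(* Write J_Phi = sum_m lam_m |psi_m><psi_m| and let w_(m,i) be the weight of
   psi_m on the block |i> (x) C^d, so that sum_i w_(m,i) = 1.  Positivity and
   trace preservation of Phi bound each diagonal block of J_Phi by 1/d, hence
   lam_m w_(m,i) <= 1/d, while the trace of the i-th block gives
   sum_m lam_m w_(m,i) = (sum_j T_ij) / d.  Any k eigenvalues therefore sum to
   at most sum_i min(k, sum_j T_ij) / d, which is the sum of the k largest
   entries of mu(T). *)

Section StaircaseVector.
Variable R : archiRealFieldType.

Definition s_entry_of (r : R) (k : nat) : R :=
  let n := Num.floor r in
  if (k%:Z < n)%R then 1 else if k%:Z == n then r - n%:~R else 0.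

Lemma s_entry_of_le1 r k : s_entry_of r k <= 1.
Proof.
rewrite /s_entry_of; case: ifP => _ //; case: ifP => _ //.
have := floor_itv r; rewrite intrD => /andP[_ ?]; lra.
Qed.

Lemma s_entry_of_nonincreasing r :
  {homo s_entry_of r : j k / (j <= k)%N >-> k <= j}.
Proof.
move=> j k jk; have [->|kj] := eqVneq k j; first by [].
rewrite {2}/s_entry_of; case: ltP => [jn|nj]; first exact: s_entry_of_le1.
have nk : Num.floor r < k%:Z by lia.
rewrite /s_entry_of ltNge (ltW nk) eq_sym (lt_eqF nk) /=.
by case: eqP => _ //; rewrite subr_ge0 floor_le.
Qed.

Lemma sum_s_entry_of r k : 0 <= r ->
  \sum_(j < k) s_entry_of r j = Num.min k%:R r.
Proof.
move=> r0; elim: k => [|k IH]; first by rewrite big_ord0 min_l.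
rewrite big_ord_recr /= IH /s_entry_of.
have /andP[nr rn1] := floor_itv r.
set n := Num.floor r in nr rn1 *.
have [kn|nk|kn] := ltgtP (k%:Z) n.
- have kr : k.+1%:R <= r.
    by apply: le_trans nr; rewrite -[_%:R]/(k.+1%:Z%:~R) ler_int; lia.
  rewrite !min_l -?natr1 //; lra.
- have rk : r <= k%:R.
    by apply/ltW/(lt_le_trans rn1); rewrite -[k%:R]/(k%:Z%:~R) ler_int; lia.
  by rewrite !min_r ?addr0 // -natr1; lra.
- rewrite -kn /= in nr rn1 *; rewrite intrD in rn1.
  by rewrite min_l // min_r -?natr1; lra.
Qed.

End StaircaseVector.

Lemma s_entryE (R : realType) d (T : 'M[R]_d) i k :
  s_entry T i k = s_entry_of (rowsum T i) k.
Proof. by []. Qed.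

Section SortDescending.
Variable R : realType.

Let ge_total : total (fun a b : R => b <= a).
Proof. by move=> a b; rewrite orbC le_total. Qed.

Let ge_trans : transitive (fun a b : R => b <= a).
Proof. by move=> y x z yx zy; exact: le_trans zy yx. Qed.

Let ge_anti : antisymmetric (fun a b : R => b <= a).
Proof. by move=> a b /andP[ba ab]; apply/le_anti; rewrite ab ba. Qed.

Lemma sum_take_sort_desc_mkseq (f : nat -> R) n k :
  {homo f : i j / (i <= j)%N >-> j <= i} -> (k <= n)%N ->
  \sum_(v <- take k (sort_desc (mkseq f n))) v = \sum_(j < k) f j.
Proof.
move=> f_noninc kn; rewrite /sort_desc sorted_sort //; last first.
  exact/(homo_sorted f_noninc)/iota_sorted.
rewrite /mkseq -map_take take_iota (minn_idPl kn) big_map.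
by rewrite -(big_mkord xpredT) /index_iota subn0.
Qed.

Lemma sum_take_sort_desc_perm (I : finType) (f : I -> R) (lam : seq R) k :
  perm_eq lam [seq f i | i <- enum I] ->
  exists t : seq I, [/\ uniq t, (size t <= k)%N &
    \sum_(v <- take k (sort_desc lam)) v = \sum_(i <- t) f i].
Proof.
rewrite /sort_desc => /(perm_sortP ge_total ge_trans ge_anti) ->.
rewrite sort_map -map_take big_map.
exists (take k (sort (relpre f (fun a b => b <= a)) (enum I))); split => //.
  by rewrite take_uniq // sort_uniq enum_uniq.
by rewrite size_take_min geq_minl.
Qed.

End SortDescending.

Lemma sum_take_mu_succ (R : realType) d (T : 'M[R]_d) k :
  (forall i j, 0 <= T i j) -> (k <= d * d)%N ->
  \sum_(v <- take k (sort_desc (mu_succ T))) v =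
  d%:R^-1 * \sum_i Num.min k%:R (rowsum T i).
Proof.
move=> T_ge0 kd; rewrite sum_take_sort_desc_mkseq //; last first.
  move=> j j' jj' /=; rewrite ler_wpM2l ?invr_ge0 ?ler0n //.
  by apply: ler_sum => i _; rewrite !s_entryE s_entry_of_nonincreasing.
rewrite -mulr_sumr exchange_big /=; congr (_ * _); apply: eq_bigr => i _.
by rewrite sum_s_entry_of // sumr_ge0.
Qed.

Lemma sum_mxtens (V : nmodType) m n (F : 'I_(m * n) -> V) :
  \sum_p F p = \sum_(a < m) \sum_(j < n) F (mxtens_index (a, j)).
Proof.
rewrite pair_big /= (reindex (@mxtens_index m n)) /=; last first.
  by exists (@mxtens_unindex m n) => x _; rewrite ?mxtens_indexK ?mxtens_unindexK.
by apply: eq_bigr => -[a j].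
Qed.

Lemma sum_delta_mull (V : pzSemiRingType) n (i : 'I_n) (F : 'I_n -> V) :
  \sum_a (a == i)%:R * F a = F i.
Proof.
rewrite (bigD1 i) //= eqxx mul1r big1 ?addr0 // => a /negbTE ->.
by rewrite mul0r.
Qed.

Lemma char_poly_similar (F : comNzRingType) n (A Q Q' : 'M[F]_n) :
  Q *m Q' = 1%:M -> char_poly (Q *m A *m Q') = char_poly A.
Proof.
move=> QQ'; have e : char_poly_mx (Q *m A *m Q') =
    map_mx polyC Q *m char_poly_mx A *m map_mx polyC Q'.
  rewrite /char_poly_mx mulmxBr mulmxBl !map_mxM; congr (_ - _).
  by rewrite scalar_mxC -mulmxA -map_mxM QQ' map_mx1 mulmx1.
rewrite /char_poly e !det_mulmx mulrC mulrA -det_mulmx -map_mxM.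
by rewrite (mulmx1C QQ') map_mx1 det1 mul1r.
Qed.

Section QuadraticForm.
Variable C : numClosedFieldType.

Lemma quad_formE n (A : 'M[C]_n) (v : 'cV_n) :
  (v^t* *m A *m v) 0 0 = \sum_p \sum_q (v p 0)^* * A p q * v q 0.
Proof.
rewrite mxE exchange_big /=; apply: eq_bigr => q _.
rewrite mxE mulr_suml; apply: eq_bigr => p _.
by rewrite !mxE.
Qed.

Lemma quad_form_delta2 n (A : 'M[C]_n) (a b : 'I_n) (x y : C) :
  ((x *: delta_mx a 0 + y *: delta_mx b 0 : 'cV_n)^t* *m A
     *m (x *: delta_mx a 0 + y *: delta_mx b 0 : 'cV_n)) 0 0 =
  x^* * x * A a a + x^* * y * A a b + y^* * x * A b a + y^* * y * A b b.
Proof.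
have entry (a' b' : 'I_n) :
    (delta_mx 0 a' : 'rV_n) *m A *m (delta_mx b' 0 : 'cV_n) = (A a' b')%:M.
  by apply/matrixP => i j; rewrite !ord1 -rowE -colE !mxE.
have -> : (x *: delta_mx a 0 + y *: delta_mx b 0 : 'cV_n)^t* =
    x^* *: delta_mx 0 a + y^* *: delta_mx 0 b.
  apply/matrixP => i j.
  by rewrite !mxE ord1 eqxx /= rmorphD /= !rmorphM /= !conjC_nat !andbT.
rewrite /= !mulmxDl !mulmxDr -!scalemxAl -!scalemxAr !entry !scale_scalar_mx.
by rewrite !mxE !mulr1n !mulrA !addrA.
Qed.

End QuadraticForm.

Section PositiveSemidefinite.
Variable R : realType.
Local Notation C := R[i].

Lemma psd_hermsymmx n (A : 'M[C]_n) : psd A -> A \is hermsymmx.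
Proof.
move=> A_psd; rewrite is_hermitianmxE expr0 scale1r; apply/eqP/matrixP => a b.
rewrite !mxE.
have real_form (x y : C) :
    (x^* * x * A b b + x^* * y * A b a + y^* * x * A a b + y^* * y * A a a)^* =
    x^* * x * A b b + x^* * y * A b a + y^* * x * A a b + y^* * y * A a a.
  by rewrite -quad_form_delta2; exact/geC0_conj/A_psd.
(* Polarization: the forms at [e_b], [e_a], [e_b + e_a] and [e_b + i e_a] are real. *)
move: (real_form 1 1) (real_form 1 'i) (real_form 1 0) (real_form 0 1).
rewrite !rmorphD !rmorphM /= !conjCK conjCi !rmorph1 !rmorph0 /=.
rewrite !(mul0r, mulr0, mul1r, mulr1, add0r, addr0) => e1 e2 e3 e4.
rewrite e3 e4 in e1 e2.
have ii : 'i * 'i = -1 :> C by rewrite -expr2 sqrCi.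
have key : 2 * ((A b a)^* - A a b) =
    ((A b b + (A b a)^* + (A a b)^* + A a a) - (A b b + A b a + A a b + A a a))
  + 'i * ((A b b + - 'i * (A b a)^* + 'i * (A a b)^* + 'i * - 'i * A a a)
          - (A b b + 'i * A b a + - 'i * A a b + - 'i * 'i * A a a))
  + (1 + 'i * 'i) * ((A b a)^* - (A a b)^* + A b a - A a b) by ring.
move: key; rewrite e1 e2 !subrr ii subrr !(mulr0, mul0r, addr0) => /eqP.
by rewrite mulf_eq0 pnatr_eq0 /= subr_eq0 => /eqP ->.
Qed.

Lemma psd_rank1 n (v : 'cV[C]_n) : psd (v *m v^t*).
Proof.
move=> w; rewrite quad_formE.
have -> : \sum_p \sum_q (w p 0)^* * (v *m v^t*) p q * w q 0 =
    (\sum_p (w p 0)^* * v p 0) * (\sum_p (w p 0)^* * v p 0)^*.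
  rewrite rmorph_sum mulr_suml; apply: eq_bigr => p _.
  rewrite mulr_sumr; apply: eq_bigr => q _.
  by rewrite !mxE big_ord1 !mxE rmorphM /= conjCK; ring.
exact: mul_conjC_ge0.
Qed.

Lemma psdZ n (A : 'M[C]_n) (c : C) : 0 <= c -> psd A -> psd (c *: A).
Proof.
move=> c_ge0 A_psd v; rewrite -scalemxAr -scalemxAl mxE.
exact: mulr_ge0 (A_psd v).
Qed.

Lemma psd_diag_ge0 n (A : 'M[C]_n) (a : 'I_n) : psd A -> 0 <= A a a.
Proof.
move=> /(_ (1 *: delta_mx a 0 + 0 *: delta_mx a 0)).
rewrite quad_form_delta2 !rmorph1 !rmorph0.
by rewrite !(mul0r, mulr0, mul1r, addr0).
Qed.

End PositiveSemidefinite.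

Section JamiolkowskiSpectrum.
Variables (R : realType) (d : nat) (Phi : {linear 'M[R[i]]_d -> 'M[R[i]]_d}).
Hypothesis Phi_tp : forall X, \tr (Phi X) = \tr X.
Hypothesis Phi_cp : forall k (X : 'M[R[i]]_(d * k)), psd X -> psd (ampl Phi X).
Local Notation C := R[i].
Local Notation J := (jamiolkowski Phi).

(* Complete positivity with a trivial ancilla ([k = 1]). *)
Lemma Phi_rank1_diag_ge0 (y : 'cV[C]_d) i : 0 <= Phi (y *m y^t*) i i.
Proof.
pose z : 'cV[C]_(d * 1) := \col_p y (mxtens_unindex p).1 0.
have := psd_diag_ge0 (mxtens_index (i, 0 : 'I_1)) (Phi_cp (psd_rank1 z)).
rewrite /ampl mxE mxtens_indexK /=.
suff -> : \matrix_(a, b) (z *m z^t*) (mxtens_index (a, 0)) (mxtens_index (b, 0))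
  = y *m y^t* :> 'M_d by [].
by apply/matrixP => a b; rewrite !mxE !big_ord1 !mxE !mxtens_indexK.
Qed.

Lemma jamiolkowski_tensE a j b l :
  J (mxtens_index (a, j)) (mxtens_index (b, l)) =
  d%:R^-1 * Phi (delta_mx j l) a b.
Proof.
rewrite /jamiolkowski /ampl !mxE !mxtens_indexK /=.
congr (_ * (Phi _ a b)); apply/matrixP => x y.
by rewrite !mxE big_ord1 !mxE !mxtens_indexK /= conjC_nat -natrM mulnb.
Qed.

Lemma jamiolkowski_psd : psd J.
Proof. by apply: psdZ; [rewrite invr_ge0 ler0n | exact/Phi_cp/psd_rank1]. Qed.

Definition tens_ket (i : 'I_d) (x : 'cV[C]_d) : 'cV[C]_(d * d) :=
  \col_p (((mxtens_unindex p).1 == i)%:R * x (mxtens_unindex p).2 0).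

(* With [y = conj x] the left side is [<i|Phi (y y^H)|i> / d], which is at most
   [tr (Phi (y y^H)) / d = |x|^2 / d]. *)
Lemma jamiolkowski_block_le (i : 'I_d) (x : 'cV[C]_d) :
  ((tens_ket i x)^t* *m J *m tens_ket i x) 0 0 <=
  d%:R^-1 * \sum_a (x a 0)^* * x a 0.
Proof.
rewrite quad_formE sum_mxtens.
under eq_bigr => a _ do under eq_bigr => j _ do rewrite sum_mxtens.
rewrite [X in X <= _](_ : _ = \sum_a (a == i)%:R * \sum_j \sum_b (b == i)%:R *
    \sum_l (x j 0)^* * J (mxtens_index (a, j)) (mxtens_index (b, l)) * x l 0);
  last first.
  apply: eq_bigr => a _; rewrite mulr_sumr; apply: eq_bigr => j _.
  rewrite mulr_sumr; apply: eq_bigr => b _; rewrite !mulr_sumr.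
  apply: eq_bigr => l _; rewrite !mxE !mxtens_indexK /= rmorphM /= conjC_nat.
  ring.
rewrite sum_delta_mull; under eq_bigr => j _ do rewrite sum_delta_mull.
pose y := map_mx Num.conj x.
have -> : \sum_j \sum_l
    (x j 0)^* * J (mxtens_index (i, j)) (mxtens_index (i, l)) * x l 0 =
    d%:R^-1 * Phi (y *m y^t*) i i.
  rewrite [y *m y^t*]matrix_sum_delta linear_sum summxE mulr_sumr.
  apply: eq_bigr => j _; rewrite linear_sum summxE mulr_sumr.
  apply: eq_bigr => l _; rewrite jamiolkowski_tensE linearZ_LR.
  by rewrite [in RHS]mxE !mxE big_ord1 !mxE conjCK; ring.
rewrite ler_wpM2l ?invr_ge0 ?ler0n //.
have -> : \sum_a (x a 0)^* * x a 0 = \tr (Phi (y *m y^t*)).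
  by rewrite Phi_tp; apply: eq_bigr => a _; rewrite !mxE big_ord1 !mxE conjCK.
rewrite /mxtrace (bigD1 i) //= lerDl.
by apply: sumr_ge0 => a _; exact: Phi_rank1_diag_ge0.
Qed.

Local Notation P := (spectralmx J).
Local Notation D := (spectral_diag J).

Lemma jamiolkowski_spectral : J = P^t* *m diag_mx D *m P.
Proof.
have /orthomx_spectralP {1}-> :=
  hermitian_normalmx (psd_hermsymmx jamiolkowski_psd).
by rewrite invmx_unitary // spectral_unitarymx.
Qed.

Lemma spectral_mulmxtV : P *m P^t* = 1%:M.
Proof. exact/unitarymxP/spectral_unitarymx. Qed.

Lemma jamiolkowski_quad_form (v : 'cV_(d * d)) :
  (v^t* *m J *m v) 0 0 = \sum_m D 0 m * (((P *m v) m 0)^* * (P *m v) m 0).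
Proof.
have -> : v^t* *m J *m v = (P *m v)^t* *m diag_mx D *m (P *m v).
  by rewrite [in LHS]jamiolkowski_spectral !mulmxA trmx_mul map_mxM.
by rewrite mxE; apply: eq_bigr => m _; rewrite mul_mx_diag !mxE; ring.
Qed.

Lemma jamiolkowski_spectralE p q : J p q = \sum_m (P m p)^* * D 0 m * P m q.
Proof.
rewrite [in LHS]jamiolkowski_spectral mxE; apply: eq_bigr => m _.
by rewrite mul_mx_diag !mxE.
Qed.

Lemma spectral_diag_jamiolkowski_ge0 m : 0 <= D 0 m.
Proof.
have P_col m' : (P *m \col_q (P m q)^*) m' 0 = (m' == m)%:R.
  have := congr1 (fun M : 'M_(d * d) => M m' m) spectral_mulmxtV.
  by rewrite !mxE => <-; apply: eq_bigr => q _; rewrite !mxE.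
have := jamiolkowski_psd (\col_q (P m q)^*).
rewrite jamiolkowski_quad_form (bigD1 m) //= big1 ?addr0; last first.
  by move=> m' /negbTE m'm; rewrite P_col m'm rmorph0 !mul0r mulr0.
by rewrite P_col eqxx rmorph1 !mulr1.
Qed.

Definition block_weight (m : 'I_(d * d)) (i : 'I_d) : C :=
  \sum_j P m (mxtens_index (i, j)) * (P m (mxtens_index (i, j)))^*.

Lemma block_weight_ge0 m i : 0 <= block_weight m i.
Proof. by apply: sumr_ge0 => j _; rewrite mul_conjC_ge0. Qed.

Lemma sum_block_weight m : \sum_i block_weight m i = 1.
Proof.
have := congr1 (fun M : 'M_(d * d) => M m m) spectral_mulmxtV.
rewrite !mxE eqxx /= => PPm; apply: etrans PPm; rewrite sum_mxtens.
by apply: eq_bigr => i _; apply: eq_bigr => j _; rewrite !mxE.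
Qed.

Lemma eigen_block_weight_le m i : D 0 m * block_weight m i <= d%:R^-1.
Proof.
pose x : 'cV[C]_d := \col_j (P m (mxtens_index (i, j)))^*.
have Px : (P *m tens_ket i x) m 0 = block_weight m i.
  rewrite mxE sum_mxtens -[RHS](sum_delta_mull i (block_weight m)).
  apply: eq_bigr => a _; rewrite mulr_sumr; apply: eq_bigr => j _.
  by rewrite !mxE mxtens_indexK /=; case: eqP => [->|_]; rewrite ?mul0r ?mulr0 ?mul1r.
have x_norm : \sum_a (x a 0)^* * x a 0 = block_weight m i.
  by apply: eq_bigr => j _; rewrite !mxE conjCK.
have := jamiolkowski_block_le i x.
rewrite x_norm jamiolkowski_quad_form (bigD1 m) //= Px geC0_conj ?block_weight_ge0 //.
move=> le_w; have {le_w} :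
    D 0 m * block_weight m i * block_weight m i <= d%:R^-1 * block_weight m i.
  apply: le_trans le_w; rewrite -mulrA lerDl; apply: sumr_ge0 => m' _.
  by apply: mulr_ge0; [exact: spectral_diag_jamiolkowski_ge0 | rewrite mulrC mul_conjC_ge0].
have [->|w_neq0] := eqVneq (block_weight m i) 0 => [_|].
  by rewrite mulr0 invr_ge0 ler0n.
by rewrite ler_pM2r // lt0r w_neq0 block_weight_ge0.
Qed.

Lemma sum_eigen_block_weight i :
  \sum_m D 0 m * block_weight m i =
  \sum_j J (mxtens_index (i, j)) (mxtens_index (i, j)).
Proof.
under [RHS]eq_bigr => j _ do rewrite jamiolkowski_spectralE.
rewrite exchange_big /=; apply: eq_bigr => m _.
by rewrite mulr_sumr; apply: eq_bigr => j _; ring.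
Qed.

Lemma spectrum_jamiolkowski_perm (lam : seq R) : spectrum J lam ->
  perm_eq lam [seq complex.Re (D 0 m) | m <- enum 'I_(d * d)].
Proof.
rewrite /spectrum => lam_spec.
have charJ : char_poly J = \prod_(m < d * d) ('X - (D 0 m)%:P).
  rewrite [in LHS]jamiolkowski_spectral char_poly_similar; last first.
    exact/mulmx1C/spectral_mulmxtV.
  rewrite char_poly_trig ?diag_mx_is_trig //; apply: eq_bigr => m _.
  by rewrite mxE eqxx mulr1n.
have := @prod_XsubC_eq _ (map (real_complex R) lam) (map (D 0) (enum 'I_(d * d))).
rewrite !big_map -enumT big_enum /= -charJ lam_spec => /(_ erefl).
have -> : map (D 0) (enum 'I_(d * d)) =
    map (real_complex R) [seq complex.Re (D 0 m) | m <- enum 'I_(d * d)].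
  rewrite -[in RHS]map_comp; apply: eq_map => m /=.
  by rewrite RRe_real // ger0_real // spectral_diag_jamiolkowski_ge0.
exact: (perm_map_inj (@complexI R)).
Qed.

Variable T : 'M[R]_d.
Hypothesis Phi_T : classical_action Phi T.

Lemma sum_eigen_block_weight_rowsum i :
  \sum_m D 0 m * block_weight m i = d%:R^-1 * real_complex R (rowsum T i).
Proof.
rewrite sum_eigen_block_weight.
under eq_bigr => j _ do rewrite jamiolkowski_tensE -Phi_T.
by rewrite /rowsum rmorph_sum mulr_sumr.
Qed.

Lemma sum_eigenvalues_le (t : seq 'I_(d * d)) k : uniq t -> (size t <= k)%N ->
  \sum_(m <- t) complex.Re (D 0 m) <=
  d%:R^-1 * \sum_i Num.min k%:R (rowsum T i).
Proof.
move=> t_uniq t_size; rewrite -lecR rmorphM fmorphV rmorph_nat !rmorph_sum /=.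
under eq_bigr => m _ do
  rewrite RRe_real ?ger0_real ?spectral_diag_jamiolkowski_ge0 //.
have -> : \sum_(m <- t) D 0 m = \sum_i \sum_(m <- t) D 0 m * block_weight m i.
  rewrite exchange_big /=; apply: eq_bigr => m _.
  by rewrite -mulr_sumr sum_block_weight mulr1.
rewrite mulr_sumr; apply: ler_sum => i _.
have [_|_] := leP (k%:R) (rowsum T i).
  rewrite rmorph_nat; apply: le_trans (_ : \sum_(m <- t) d%:R^-1 <= _).
    by apply: ler_sum => m _; exact: eigen_block_weight_le.
  rewrite big_uniq // sumr_const (card_uniqP _) // -[_ *+ size t]mulr_natr.
  by rewrite ler_wpM2l ?invr_ge0 ?ler0n // ler_nat.
rewrite -sum_eigen_block_weight_rowsum.
rewrite big_uniq // [X in _ <= X](bigID (mem t)) /= lerDl.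
by apply: sumr_ge0 => m _; apply: mulr_ge0;
  [exact: spectral_diag_jamiolkowski_ge0 | exact: block_weight_ge0].
Qed.

End JamiolkowskiSpectrum.

Unset Implicit Arguments.

Theorem mainTheorem3 (R : realType) (d : nat) (T : 'M[R]_d)
    (Phi : {linear 'M[R[i]]_d -> 'M[R[i]]_d}) :
  (0 < d)%N ->
  (forall i j, 0 <= T i j) ->
  (forall j, \sum_(i < d) T i j = 1) ->
  is_channel Phi ->
  classical_action Phi T ->
  forall lam : seq R, spectrum (jamiolkowski Phi) lam ->
  majorizes (mu_succ T) lam.
Proof.
move=> _ T_ge0 _ [Phi_tp Phi_cp] Phi_T lam lam_spec.
have lam_perm := spectrum_jamiolkowski_perm Phi_cp lam_spec.
split; first by rewrite size_mkseq (perm_size lam_perm) size_map size_enum_ord.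
move=> k; rewrite size_mkseq => kd.
have [t [t_uniq t_size ->]] := sum_take_sort_desc_perm k lam_perm.
by rewrite sum_take_mu_succ //; exact: sum_eigenvalues_le.
Qed.
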